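(* Let $A$ and $B$ be complex Hilbert spaces and $n\geq 2$. Let $\vec{\alpha}=(\alpha_1,\ldots,\alpha_n)\in\mathcal{A}_n$. Then for all bounded operators $M_1,\ldots,M_n:A\rightarrow B$ and all positive semidefinite trace class operators $\rho$ on $A$, \[ \left(\sum_{i=1}^n M_i\right)\rho\left(\sum_{i=1}^n M_i\right)^\dagger \leq \sum_{i=1}^n \alpha_i M_i\rho M_i^\dagger . \] Conversely, let $\vec{\alpha}\in\mathbb{R}^n$ and let $(P_1,\ldots,P_n)$ be a projective measurement on $A$ (projections $P_i=P_i^\dagger=P_i^2$ with $\sum_{i=1}^n P_i=\mathbb{1}_A$) with $P_i\neq 0$ for all $i$. If $\left(\sum_i P_i\right)\rho\left(\sum_i P_i\right)^\dagger=\rho \leq \sum_{i=1}^n \alpha_i P_i\rho P_i$ holds for all positive semidefinite trace class operators $\rho$ on $A$, then $\vec{\alpha}\in\mathcal{A}_n$.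
   Context: $\mathcal{A}_n := \{\vec{\alpha}\in\mathbb{R}^n : \operatorname{diag}(\vec{\alpha}) \geq J\}$, where $\operatorname{diag}(\vec{\alpha})=\sum_{i=1}^n\alpha_i|i\rangle\langle i|$ is the $n\times n$ diagonal matrix with entries $\alpha_i$, $J=\sum_{i,j=1}^n|i\rangle\langle j|$ is the $n\times n$ all-ones matrix, and $\geq$ denotes the Löwner (positive semidefinite) order. All operator inequalities are in the Löwner order. *)

From HB Require Import structures.
From mathcomp Require Import all_boot all_order all_algebra.
From mathcomp Require Import reals.
From mathcomp.real_closed Require Import complex.
From Stdlib Require Import ClassicalEpsilon.

Set Implicit Arguments.
Unset Strict Implicit.
Unset Printing Implicit Defensive.
Import Order.TTheory GRing.Theory Num.Theory.
Local Open Scope ring_scope.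

(* Physics convention: the inner product is conjugate-linear in its    *)
(* first argument and linear in its second argument.                   *)
Record HilbertSpace (R : realType) := {
  hs_car :> lmodType R[i];
  ip : hs_car -> hs_car -> R[i];
  ip_linr : forall (a : R[i]) (x y z : hs_car),
      ip x (a *: y + z) = a * ip x y + ip x z;
  ip_conj : forall x y : hs_car, ip y x = Num.conj (ip x y);
  ip_pos : forall x : hs_car, 0 <= ip x x;
  ip_def : forall x : hs_car, ip x x = 0 -> x = 0;
  hs_complete : forall u : nat -> hs_car,
      (forall e : R, 0 < e -> exists N : nat, forall m n : nat, (N <= m)%N -> (N <= n)%N ->
          Num.sqrt (complex.Re (ip (u m - u n) (u m - u n))) < e) ->
      exists l : hs_car, forall e : R, 0 < e -> exists N : nat, forall n : nat, (N <= n)%N ->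
          Num.sqrt (complex.Re (ip (u n - l) (u n - l))) < e
}.

Section Ops.
Variable R : realType.

Definition hnorm (A : HilbertSpace R) (x : A) : R :=
  Num.sqrt (complex.Re (ip x x)).

Definition bounded_op (A B : HilbertSpace R) (f : A -> B) : Prop :=
  (forall (a : R[i]) (x y : A), f (a *: x + y) = a *: f x + f y) /\
  exists K : R, forall x : A, hnorm (f x) <= K * hnorm x.

Definition is_adjoint (A B : HilbertSpace R) (f : A -> B) (g : B -> A) : Prop :=
  forall (x : A) (y : B), ip (f x) y = ip x (g y).

(* The adjoint f^dagger of f (exists and is unique for bounded f;
   chosen by classical choice, arbitrary otherwise). *)
Definition adjoint (A B : HilbertSpace R) (f : A -> B) : B -> A :=
  epsilon (inhabits (fun _ : B => (0 : A))) (fun g => is_adjoint f g).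

Definition psd_op (A : HilbertSpace R) (rho : A -> A) : Prop :=
  bounded_op rho /\ forall x : A, 0 <= ip x (rho x).

Definition orthonormal (A : HilbertSpace R) (s : seq A) : Prop :=
  forall i j : nat, (i < size s)%N -> (j < size s)%N ->
    ip (nth 0 s i) (nth 0 s j) = (i == j)%:R.

(* A positive semidefinite operator is trace class iff its trace,
   i.e. the sup over finite orthonormal families e of sum <e,rho e>,
   is finite. *)
Definition psd_trace_class (A : HilbertSpace R) (rho : A -> A) : Prop :=
  psd_op rho /\
  exists T : R, forall s : seq A, orthonormal s ->
    \sum_(e <- s) ip e (rho e) <= T%:C%C.

Definition loewner (A : HilbertSpace R) (X Y : A -> A) : Prop :=
  forall x : A, ip x (X x) <= ip x (Y x).

(* A_n = { alpha in R^n | diag(alpha) >= J }, Loewner order on n x n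
   (complex) matrices: M >= 0 iff v^* M v >= 0 for all v in C^n. *)
Definition psd_mx (n : nat) (M : 'M[R[i]]_n) : Prop :=
  forall v : 'cV[R[i]]_n, 0 <= (((map_mx Num.conj v)^T *m M *m v) ord0 ord0).

Definition in_An (n : nat) (alpha : 'I_n -> R) : Prop :=
  psd_mx (diag_mx (\row_i (alpha i)%:C%C) - const_mx 1).

Definition sum_op (A B : HilbertSpace R) (n : nat) (M : 'I_n -> A -> B) : A -> B :=
  fun x => \sum_i M i x.

Definition proj_measurement (A : HilbertSpace R) (n : nat) (P : 'I_n -> A -> A) : Prop :=
  (forall i, bounded_op (P i)) /\
  (forall i, P i = adjoint (P i)) /\
  (forall i x, P i (P i x) = P i x) /\
  (forall x : A, sum_op P x = x).

End Ops.

(* If diag(alpha) >= J then alpha_i >= 1 and sum_i 1/alpha_i <= 1.  For a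
   positive operator rho, vectors w_i and W = sum_i w_i, expanding
   sum_i alpha_i <w_i - W/alpha_i, rho (w_i - W/alpha_i)> >= 0 gives
   <W, rho W> <= sum_i alpha_i <w_i, rho w_i>; with w_i = M_i^dagger y this is
   the first inequality tested at y.  The adjoints exist by the Riesz
   representation theorem, obtained by minimising ||x||^2 - 2 Re f(x) over the
   complete space.
   Conversely, unit vectors e_i in the ranges of the P_i are orthonormal, and
   testing the inequality with rho = |phi><phi|, phi = sum_i e_i, at
   x = sum_i c_i e_i gives |sum_i c_i|^2 <= sum_i alpha_i |c_i|^2, which is
   diag(alpha) >= J. *)

From HB Require Import structures.
From mathcomp Require Import all_boot all_order all_algebra.
From mathcomp Require Import classical_sets reals.
From mathcomp.real_closed Require Import complex.
From mathcomp Require Import ring lra.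
From Stdlib Require Import Classical ClassicalEpsilon FunctionalExtensionality.

Set Implicit Arguments.
Unset Strict Implicit.
Unset Printing Implicit Defensive.
Import Order.TTheory GRing.Theory Num.Theory.
Local Open Scope ring_scope.
Local Open Scope complex_scope.

Section RealFacts.
Variable R : realFieldType.

Lemma quadratic_ge0_discr (a b c : R) : 0 <= a ->
  (forall t, 0 <= c - 2 * t * b + t ^+ 2 * a) -> b ^+ 2 <= a * c.
Proof.
move=> a_ge0 q_ge0; have [a0|a_neq0] := eqVneq a 0.
  have [b0|b_neq0] := eqVneq b 0; first by rewrite a0 b0; lra.
  have := q_ge0 ((c + 1) / (2 * b)); rewrite a0.
  have -> : c - 2 * ((c + 1) / (2 * b)) * b + ((c + 1) / (2 * b)) ^+ 2 * 0 = -1.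
    by field.
  lra.
have a_gt0 : 0 < a by rewrite lt_def a_neq0 a_ge0.
have := q_ge0 (b / a).
have -> : c - 2 * (b / a) * b + (b / a) ^+ 2 * a = (a * c - b ^+ 2) / a by field.
by rewrite pmulr_lge0 ?invr_gt0 // subr_ge0.
Qed.

Lemma amgm_le (k N r : R) : 0 <= k -> 0 <= N -> r ^+ 2 <= k * N -> 2 * r <= N + k.
Proof.
move=> k_ge0 N_ge0 r_le.
have : (2 * r) ^+ 2 <= (N + k) ^+ 2 by have := sqr_ge0 (N - k); nra.
nra.
Qed.

End RealFacts.

Lemma ler_sqrtM_of_sqr (R : rcfType) (r a b : R) : 0 <= a -> 0 <= b ->
  r ^+ 2 <= a * b -> r <= Num.sqrt a * Num.sqrt b.
Proof.
move=> a_ge0 b_ge0 h; rewrite -sqrtrM //; apply: le_trans (ler_norm r) _.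
by rewrite -sqrtr_sqr ler_wsqrtr.
Qed.

Lemma eventually_invS_lt (R : archiRealFieldType) (e : R) : 0 < e ->
  exists N, forall j, (N <= j)%N -> j.+1%:R^-1 < e.
Proof.
move=> e_gt0; exists (Num.Def.archi_bound e^-1) => j hj.
have eV_lt : e^-1 < (Num.Def.archi_bound e^-1)%:R.
  by apply: archi_boundP; rewrite invr_ge0 ltW.
have : e^-1 < j.+1%:R.
  by apply: (lt_le_trans eV_lt); rewrite ler_nat (leq_trans hj).
by rewrite invf_plt ?posrE ?ltr0Sn.
Qed.

Section ComplexFacts.
Variable R : rcfType.

Lemma conj_real (t : R) : Num.conj (t%:C) = t%:C.
Proof. exact: conjc_real. Qed.

Lemma Re_realM (t : R) (w : R[i]) : complex.Re (t%:C * w) = t * complex.Re w.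
Proof. by case: w => a b /=; ring. Qed.

End ComplexFacts.

HB.instance Definition _ (R : realType) (H : HilbertSpace R) (x : H) :=
  GRing.isLinear.Build R[i] H R[i] *%R (ip x) (fun a => @ip_linr R H a x).

Section InnerProduct.
Variables (R : realType) (H : HilbertSpace R).
Local Notation C := R[i].
Implicit Types (x y z : H) (a : C).

Lemma ipDr x y z : ip x (y + z) = ip x y + ip x z.
Proof. exact: linearD. Qed.

Lemma ipBr x y z : ip x (y - z) = ip x y - ip x z.
Proof. exact: linearB. Qed.

Lemma ipZr a x y : ip x (a *: y) = a * ip x y.
Proof. exact: linearZ. Qed.

Lemma ip_sumr (I : Type) (r : seq I) (P : pred I) (F : I -> H) x :
  ip x (\sum_(i <- r | P i) F i) = \sum_(i <- r | P i) ip x (F i).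
Proof. exact: linear_sum. Qed.

Lemma ipBl x y z : ip (x - y) z = ip x z - ip y z.
Proof. by rewrite ![ip _ z]ip_conj ipBr rmorphB. Qed.

Lemma ipZl a x y : ip (a *: x) y = Num.conj a * ip x y.
Proof. by rewrite ![ip _ y]ip_conj ipZr rmorphM. Qed.

Lemma ip_suml (I : Type) (r : seq I) (P : pred I) (F : I -> H) y :
  ip (\sum_(i <- r | P i) F i) y = \sum_(i <- r | P i) ip (F i) y.
Proof.
rewrite ip_conj ip_sumr rmorph_sum; apply: eq_bigr => i _.
by rewrite [RHS]ip_conj.
Qed.

Definition rdot x y : R := complex.Re (ip x y).
Definition sqnorm x : R := rdot x x.

Lemma ip_sqnorm x : ip x x = (sqnorm x)%:C.
Proof.
have := ip_pos x; rewrite /sqnorm /rdot; case: (ip x x) => a b.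
by rewrite lecE /= => /andP[/eqP -> _].
Qed.

Lemma sqnorm_ge0 x : 0 <= sqnorm x.
Proof. by rewrite -lecR -ip_sqnorm ip_pos. Qed.

Lemma sqnorm_eq0 x : sqnorm x = 0 -> x = 0.
Proof. by move=> x0; apply: ip_def; rewrite ip_sqnorm x0. Qed.

Lemma rdotC x y : rdot x y = rdot y x.
Proof. by rewrite /rdot [ip y x]ip_conj; case: (ip x y). Qed.

Lemma rdotDr x y z : rdot x (y + z) = rdot x y + rdot x z.
Proof. by rewrite /rdot ipDr raddfD. Qed.

Lemma rdotDl x y z : rdot (x + y) z = rdot x z + rdot y z.
Proof. by rewrite !(rdotC _ z) rdotDr. Qed.

Lemma rdotNr x y : rdot x (- y) = - rdot x y.
Proof. by rewrite /rdot linearN raddfN. Qed.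

Lemma rdotZr x (t : R) y : rdot x (t%:C *: y) = t * rdot x y.
Proof. by rewrite /rdot ipZr Re_realM. Qed.

Lemma sqnormD x y : sqnorm (x + y) = sqnorm x + 2 * rdot x y + sqnorm y.
Proof. by rewrite /sqnorm rdotDl !rdotDr (rdotC y x); ring. Qed.

Lemma sqnormN x : sqnorm (- x) = sqnorm x.
Proof. by rewrite /sqnorm rdotNr rdotC rdotNr opprK. Qed.

Lemma sqnormB x y : sqnorm (x - y) = sqnorm x - 2 * rdot x y + sqnorm y.
Proof. by rewrite sqnormD rdotNr sqnormN; ring. Qed.

Lemma sqnormZc a x : sqnorm (a *: x) = complex.Re (Num.conj a * a) * sqnorm x.
Proof.
by rewrite [LHS]/sqnorm /rdot ipZl ipZr mulrA ip_sqnorm mulrC Re_realM mulrC.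
Qed.

Lemma sqnormZ (t : R) x : sqnorm (t%:C *: x) = t ^+ 2 * sqnorm x.
Proof. by rewrite sqnormZc conj_real -rmorphM expr2. Qed.

Lemma rdot_CS x y : rdot x y ^+ 2 <= sqnorm x * sqnorm y.
Proof.
apply: quadratic_ge0_discr => [|t]; first exact: sqnorm_ge0.
by have := sqnorm_ge0 (y - t%:C *: x); rewrite sqnormB rdotZr sqnormZ rdotC mulrA.
Qed.

Lemma ip_CS x y : complex.Re (Num.conj (ip x y) * ip x y) <= sqnorm x * sqnorm y.
Proof.
set c := ip x y; set s := complex.Re (Num.conj c * c).
have s_ge0 : 0 <= s by rewrite /s; case: (c) => a b /=; nra.
have := rdot_CS x (Num.conj c *: y).
rewrite /rdot ipZr -/c sqnormZc conjCK [c * _]mulrC -/s.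
have [->|s_neq0] := eqVneq s 0; first by rewrite mulr_ge0 ?sqnorm_ge0.
have s_gt0 : 0 < s by rewrite lt_def s_neq0.
by rewrite expr2 mulrCA ler_pM2l.
Qed.

End InnerProduct.

Section LinearFun.
Variables (R : realType) (U V : lmodType R[i]) (f : U -> V).
Hypothesis f_lin : linear f.

#[local] HB.instance Definition _ := GRing.isLinear.Build R[i] U V *:%R f f_lin.

Lemma linear_funB x y : f (x - y) = f x - f y.
Proof. exact: linearB. Qed.

Lemma linear_funZ a x : f (a *: x) = a *: f x.
Proof. exact: linearZ. Qed.

Lemma linear_fun_sum (I : Type) (r : seq I) (P : pred I) (F : I -> U) :
  f (\sum_(i <- r | P i) F i) = \sum_(i <- r | P i) f (F i).
Proof. exact: linear_sum. Qed.

End LinearFun.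

Section RieszReal.
Variables (R : realType) (H : HilbertSpace R) (g : H -> R) (k : R).
Hypothesis gD : {morph g : x y / x + y}.
Hypothesis gZ : forall (t : R) x, g (t%:C *: x) = t * g x.
Hypothesis k_ge0 : 0 <= k.
Hypothesis g_bounded : forall x, g x ^+ 2 <= k * sqnorm x.

(* [energy (z + w) = energy z + 2 (rdot z w - g w) + sqnorm w], so a minimizer
   [z] of the energy represents [g]. *)
Let energy x := sqnorm x - 2 * g x.

Lemma energy_lb x : - k <= energy x.
Proof.
have := amgm_le k_ge0 (sqnorm_ge0 x) (g_bounded x); rewrite /energy; lra.
Qed.

Lemma energy_parallelogram x y :
  sqnorm (x - y) = 2 * energy x + 2 * energy y - 4 * energy (2^-1%:C *: (x + y)).
Proof. by rewrite sqnormB /energy sqnormZ gZ sqnormD gD; field. Qed.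

Lemma energy_le_shift z d :
  energy z <= energy (z + d) + 2 * (hnorm z + Num.sqrt k) * hnorm d.
Proof.
have zd_le : - rdot z d <= hnorm z * hnorm d.
  by apply: ler_sqrtM_of_sqr; rewrite ?sqnorm_ge0 // sqrrN rdot_CS.
have gd_le : g d <= Num.sqrt k * hnorm d.
  by apply: ler_sqrtM_of_sqr; rewrite ?sqnorm_ge0.
have := sqnorm_ge0 d; rewrite /energy sqnormD gD; lra.
Qed.

Lemma minimizing_seq_cauchy (m : R) (u : nat -> H) :
  (forall x, m <= energy x) -> (forall j, energy (u j) < m + j.+1%:R^-1) ->
  forall j l, sqnorm (u j - u l) < 2 * j.+1%:R^-1 + 2 * l.+1%:R^-1.
Proof.
move=> m_le u_min j l; rewrite energy_parallelogram.
have := m_le (2^-1%:C *: (u j + u l)); have := u_min j; have := u_min l.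
by move: (j.+1%:R^-1) (l.+1%:R^-1) => a b; lra.
Qed.

Lemma energy_le_of_cvg (m : R) (u : nat -> H) z :
  (forall j, energy (u j) < m + j.+1%:R^-1) ->
  (forall e, 0 < e -> exists N, forall j, (N <= j)%N -> hnorm (u j - z) < e) ->
  energy z <= m.
Proof.
move=> u_min u_cvg; apply/ler_addgt0Pr => e e_gt0.
set c := hnorm z + Num.sqrt k.
have c_ge0 : 0 <= c by rewrite addr_ge0 ?sqrtr_ge0.
set d := e / (4 * (c + 1)).
have d_gt0 : 0 < d by rewrite divr_gt0 // mulr_gt0 //; lra.
have cdE : c * d = e / 4 - d by rewrite /d; field; lra.
have [N1 N1_le] := u_cvg d d_gt0.
have [N2 N2_le] : exists N, forall j, (N <= j)%N -> j.+1%:R^-1 < e / 2.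
  by apply: eventually_invS_lt; rewrite divr_gt0.
set j := maxn N1 N2.
have := energy_le_shift z (u j - z); rewrite [z + _]addrC subrK -/c.
have := u_min j; have := N2_le j (leq_maxr _ _).
have : c * hnorm (u j - z) <= c * d by rewrite ler_wpM2l // ltW // N1_le ?leq_maxl.
by move: (j.+1%:R^-1) => a; lra.
Qed.

Lemma energy_minimizer : exists z, forall x, energy z <= energy x.
Proof.
have inf_energy : has_inf (range energy).
  by split; [exists (energy 0), 0 | exists (- k) => _ [x _ <-]; apply: energy_lb].
set m := inf (range energy).
have m_le x : m <= energy x by apply: ge_inf; [case: inf_energy | exists x].
have /ClassicalEpsilon.choice[u u_min] j : exists x, energy x < m + j.+1%:R^-1.
  have jV_gt0 : 0 < j.+1%:R^-1 :> R by rewrite invr_gt0.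
  by have [_ [x _ <-]] := inf_adherent jV_gt0 inf_energy; exists x.
have [z u_cvg] : exists z, forall e, 0 < e ->
    exists N, forall j, (N <= j)%N -> hnorm (u j - z) < e.
  apply: hs_complete => e e_gt0.
  have [N N_le] : exists N, forall j, (N <= j)%N -> j.+1%:R^-1 < e ^+ 2 / 4.
    by apply: eventually_invS_lt; rewrite divr_gt0 ?exprn_gt0.
  exists N => j l Nj Nl; rewrite -[e]gtr0_norm // -sqrtr_sqr ltr_sqrt ?exprn_gt0 //.
  have := minimizing_seq_cauchy m_le u_min j l; have := N_le j Nj; have := N_le l Nl.
  by move: (j.+1%:R^-1) (l.+1%:R^-1) => a b; rewrite /sqnorm /rdot; lra.
by exists z => x; apply: le_trans (m_le x); apply: energy_le_of_cvg u_min u_cvg.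
Qed.

Lemma minimizer_rdot z : (forall x, energy z <= energy x) ->
  forall w, rdot z w = g w.
Proof.
move=> z_min w; apply/eqP; rewrite eq_sym -subr_eq0 -sqrf_eq0 eq_le sqr_ge0 andbT.
rewrite -(mulr0 (sqnorm w)); apply: quadratic_ge0_discr => [|t].
  exact: sqnorm_ge0.
have := z_min (z + t%:C *: w); rewrite /energy sqnormD sqnormZ gD gZ rdotZr.
lra.
Qed.

Lemma riesz_real : exists z, forall w, rdot z w = g w.
Proof. by have [z /minimizer_rdot] := energy_minimizer; exists z. Qed.

End RieszReal.

Lemma riesz (R : realType) (H : HilbertSpace R) (f : H -> R[i]) (k : R) :
  scalar f -> 0 <= k -> (forall x, complex.Re (f x) ^+ 2 <= k * sqnorm x) ->
  exists z, forall x, f x = ip z x.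
Proof.
move=> f_lin k_ge0 f_bounded.
have fZ : scalable_for *%R f := GRing.scalable_linear f_lin.
have [z Re_f] : exists z, forall w, rdot z w = complex.Re (f w).
  apply: riesz_real k_ge0 f_bounded => [x y|t x].
    by rewrite -raddfD /= (GRing.semilinear_linear f_lin).2.
  by rewrite fZ Re_realM.
exists z => x; apply/eqP; rewrite eq_complex -!Re_f /rdot eqxx /=.
have := Re_f ('i%C *: x).
by rewrite /rdot ipZr fZ /= !(mulrC 'i%C) !ReiNIm => /oppr_inj ->.
Qed.

Section Adjoint.
Variables (R : realType) (A B : HilbertSpace R).
Implicit Types (f : A -> B) (g : B -> A).

Lemma bounded_op_sqnorm f : bounded_op f ->
  exists K, 0 <= K /\ forall x, sqnorm (f x) <= K * sqnorm x.
Proof.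
move=> [_ [K f_le]]; exists (K ^+ 2); split=> [|x]; first exact: sqr_ge0.
have f_le' : Num.sqrt (sqnorm (f x)) <= K * Num.sqrt (sqnorm x) := f_le x.
rewrite -(sqr_sqrtr (sqnorm_ge0 (f x))) -(sqr_sqrtr (sqnorm_ge0 x)).
have := sqrtr_ge0 (sqnorm (f x)); have := sqrtr_ge0 (sqnorm x).
move: f_le'; move: (Num.sqrt (sqnorm (f x))) (Num.sqrt (sqnorm x)) => a b; nra.
Qed.

Lemma is_adjoint_ipr f g : is_adjoint f g -> forall x y, ip y (f x) = ip (g y) x.
Proof. by move=> fg x y; rewrite ip_conj fg -ip_conj. Qed.

Lemma is_adjoint_uniq f g1 g2 : is_adjoint f g1 -> is_adjoint f g2 -> g1 =1 g2.
Proof.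
move=> fg1 fg2 y; apply/eqP; rewrite -subr_eq0; apply/eqP/ip_def.
by rewrite ipBr -fg1 -fg2 subrr.
Qed.

Lemma adjoint_exists f : bounded_op f -> exists g, is_adjoint f g.
Proof.
move=> f_bnd; have [K [K_ge0 f_le]] := bounded_op_sqnorm f_bnd.
have /ClassicalEpsilon.choice[g g_ip] y : exists z, forall x, ip y (f x) = ip z x.
  apply: (@riesz _ _ _ (sqnorm y * K)); rewrite ?mulr_ge0 ?sqnorm_ge0 //.
    by move=> a x x'; rewrite f_bnd.1 ip_linr.
  move=> x; apply: le_trans (rdot_CS y (f x)) _.
  by rewrite -mulrA ler_wpM2l ?sqnorm_ge0.
by exists g => x y; rewrite ip_conj g_ip -ip_conj.
Qed.

Lemma adjointP f g : is_adjoint f g -> is_adjoint f (adjoint f).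
Proof. by move=> fg; apply: epsilon_spec; exists g. Qed.

Lemma adjoint_bounded f : bounded_op f -> is_adjoint f (adjoint f).
Proof. by move=> /adjoint_exists[g /adjointP]. Qed.

End Adjoint.

Lemma is_adjoint_sum_op (R : realType) (A B : HilbertSpace R) n
    (M : 'I_n -> A -> B) (g : 'I_n -> B -> A) :
  (forall i, is_adjoint (M i) (g i)) -> is_adjoint (sum_op M) (fun y => \sum_i g i y).
Proof.
by move=> Mg x y; rewrite /sum_op ip_suml ip_sumr; apply: eq_bigr => i _; apply: Mg.
Qed.

Section DiagMinusAllOnes.
Variables (R : realType) (n : nat).
Local Notation C := R[i].
Implicit Types (alpha : 'I_n -> R) (c : 'I_n -> C).

Lemma form_diag_sub_const (d : 'I_n -> C) (v : 'cV[C]_n) :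
  ((map_mx Num.conj v)^T *m (diag_mx (\row_i d i) - const_mx 1) *m v) ord0 ord0
  = \sum_i d i * (Num.conj (v i ord0) * v i ord0)
    - Num.conj (\sum_i v i ord0) * \sum_i v i ord0.
Proof.
rewrite mxE rmorph_sum mulr_sumr -sumrB; apply: eq_bigr => j _; rewrite mxE.
rewrite (bigD1 j) //= [in RHS](bigD1 j) //= !mxE eqxx mulr1n.
rewrite (eq_bigr (fun k => - Num.conj (v k ord0))) => [|k /negPf kj]; last first.
  by rewrite !mxE kj mulr0n sub0r mulrN1.
by rewrite sumrN; ring.
Qed.

Lemma in_AnP alpha : in_An alpha <->
  forall c, Num.conj (\sum_i c i) * \sum_i c i
            <= \sum_i (alpha i)%:C * (Num.conj (c i) * c i).
Proof.
split=> [alpha_An c | alpha_le v].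
  have := alpha_An (\col_i c i); rewrite form_diag_sub_const subr_ge0.
  by under eq_bigr do rewrite mxE; under [in X in _ <= X]eq_bigr do rewrite mxE.
by rewrite form_diag_sub_const subr_ge0.
Qed.

Lemma in_An_ge1 alpha : in_An alpha -> forall i, 1 <= alpha i.
Proof.
move=> /in_AnP alpha_le i; have := alpha_le (fun j => if j == i then 1 else 0).
rewrite -big_mkcond big_pred1_eq conjC1 mul1r.
rewrite (eq_bigr (fun j => if j == i then (alpha j)%:C else 0)) => [|j _]; last first.
  by case: eqP; rewrite ?conjC1 ?conjC0 !(mulr1, mulr0).
by rewrite -big_mkcond big_pred1_eq lecE /= eqxx.
Qed.

Lemma in_An_sumV_le1 alpha : in_An alpha -> \sum_i (alpha i)^-1 <= 1.
Proof.
move=> alpha_An; have alpha_ge1 := in_An_ge1 alpha_An.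
move: alpha_An => /in_AnP /(_ (fun i => ((alpha i)^-1)%:C)).
set s := \sum_i (alpha i)^-1.
have sE : \sum_i ((alpha i)^-1)%:C = s%:C by rewrite rmorph_sum.
under [in X in _ <= X]eq_bigr => i _.
  rewrite conj_real -!rmorphM mulrA mulfV ?mul1r; last by have := alpha_ge1 i; lra.
  over.
rewrite sE conj_real -rmorphM lecR.
have s_ge0 : 0 <= s by apply: sumr_ge0 => i _; rewrite invr_ge0; have := alpha_ge1 i; lra.
nra.
Qed.

End DiagMinusAllOnes.

Section PsdForm.
Variables (R : realType) (H : HilbertSpace R) (rho : H -> H).
Hypothesis rho_lin : linear rho.
Hypothesis rho_ge0 : forall x, 0 <= ip x (rho x).

Lemma psd_form_shift (b : R) x y :
  ip (x - b%:C *: y) (rho (x - b%:C *: y))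
  = ip x (rho x) - b%:C * (ip x (rho y) + ip y (rho x)) + (b ^+ 2)%:C * ip y (rho y).
Proof.
rewrite (linear_funB rho_lin) (linear_funZ rho_lin).
by rewrite ipBl !ipBr !ipZl !ipZr conj_real expr2 rmorphM; ring.
Qed.

Lemma psd_form_sum_le n (alpha : 'I_n -> R) (w : 'I_n -> H) :
  (forall i, 0 < alpha i) -> \sum_i (alpha i)^-1 <= 1 ->
  ip (\sum_i w i) (rho (\sum_i w i)) <= \sum_i (alpha i)%:C * ip (w i) (rho (w i)).
Proof.
move=> alpha_gt0 sumV_le1; set W := \sum_i w i; set q := ip W (rho W).
set s := \sum_i (alpha i)^-1; pose v i := w i - ((alpha i)^-1)%:C *: W.
have shiftE i : (alpha i)%:C * ip (v i) (rho (v i))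
    = (alpha i)%:C * ip (w i) (rho (w i)) - (ip (w i) (rho W) + ip W (rho (w i)))
      + ((alpha i)^-1)%:C * q.
  rewrite psd_form_shift -/q exprVn !fmorphV rmorphXn; field.
  by rewrite eq_complex /= eqxx andbT gt_eqF.
have -> : \sum_i (alpha i)%:C * ip (w i) (rho (w i))
    = q + (\sum_i (alpha i)%:C * ip (v i) (rho (v i)) + (1 - s)%:C * q).
  rewrite (eq_bigr _ (fun i _ => shiftE i)) !big_split /= sumrN big_split /=.
  rewrite -ip_sumr -(linear_fun_sum rho_lin) -ip_suml -mulr_suml -rmorph_sum.
  by rewrite -/W -/s -/q rmorphB rmorph1; ring.
rewrite lerDl; apply: addr_ge0; first apply: sumr_ge0 => i _.
  by apply: mulr_ge0; [rewrite ler0c ltW | exact: rho_ge0].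
by apply: mulr_ge0; [rewrite ler0c subr_ge0 | exact: rho_ge0].
Qed.

End PsdForm.

Section Orthonormal.
Variables (R : realType) (H : HilbertSpace R) (m : nat) (e : 'I_m -> H).
Hypothesis e_orthonormal : forall i j, ip (e i) (e j) = (i == j)%:R.

Lemma ip_orthonormal_sumr (c : 'I_m -> R[i]) k : ip (e k) (\sum_j c j *: e j) = c k.
Proof.
rewrite ip_sumr (bigD1 k) //= big1 ?addr0 => [|j jk].
  by rewrite ipZr e_orthonormal eqxx mulr1.
by rewrite ipZr e_orthonormal eq_sym (negPf jk) mulr0.
Qed.

Lemma bessel x : \sum_k ip x (e k) * ip (e k) x <= ip x x.
Proof.
set S := \sum_k _; set p := \sum_k ip (e k) x *: e k.
have pS : ip p x = S.
  by rewrite ip_suml; apply: eq_bigr => k _; rewrite ipZl -ip_conj.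
have xp : ip x p = S.
  by rewrite ip_sumr; apply: eq_bigr => k _; rewrite ipZr mulrC.
have pp : ip p p = S.
  by rewrite ip_suml; apply: eq_bigr => k _; rewrite ipZl ip_orthonormal_sumr -ip_conj.
by have := ip_pos (x - p); rewrite ipBl !ipBr pS xp pp subrr subr0 subr_ge0.
Qed.

End Orthonormal.

Definition rank_one (R : realType) (H : HilbertSpace R) (phi : H) : H -> H :=
  fun x => ip phi x *: phi.

Lemma rank_one_psd_trace_class (R : realType) (H : HilbertSpace R) (phi : H) :
  psd_trace_class (rank_one phi).
Proof.
split; first split; first split.
- by move=> a x y; rewrite /rank_one ip_linr scalerDl scalerA.
- exists (sqnorm phi) => x.
  change (Num.sqrt (sqnorm (ip phi x *: phi)) <= sqnorm phi * Num.sqrt (sqnorm x)).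
  have CS := ip_CS phi x; have phi_ge0 := sqnorm_ge0 phi.
  rewrite sqnormZc -[sqnorm phi in X in _ <= X]ger0_norm // -sqrtr_sqr.
  by rewrite -sqrtrM ?sqr_ge0 // ler_wsqrtr //; nra.
- by move=> x; rewrite /rank_one ipZr [ip x phi]ip_conj mul_conjC_ge0.
exists (sqnorm phi) => s s_on; rewrite (big_nth 0) big_mkord -ip_sqnorm.
rewrite (eq_bigr (fun k : 'I_(size s) => ip phi (nth 0 s k) * ip (nth 0 s k) phi))
  => [|k _].
  by apply: (bessel (e := fun k : 'I_(size s) => nth 0 s k)) => i j; apply: s_on.
by rewrite /rank_one ipZr mulrC.
Qed.

Section ProjectiveMeasurement.
Variables (R : realType) (A : HilbertSpace R) (n : nat) (P : 'I_n -> A -> A).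
Hypothesis P_meas : proj_measurement P.

Lemma proj_linear i : linear (P i).
Proof. by case: P_meas => /(_ i)[]. Qed.

Lemma proj_self_adjoint i : is_adjoint (P i) (P i).
Proof.
by case: P_meas => P_bnd [P_adj _]; rewrite {2}P_adj; apply: adjoint_bounded.
Qed.

Lemma proj_idem i x : P i (P i x) = P i x.
Proof. by case: P_meas => _ [_ []]. Qed.

Lemma ip_proj i x : ip x (P i x) = ip (P i x) (P i x).
Proof. by rewrite proj_self_adjoint proj_idem. Qed.

(* [<x, x> = sum_k <P_k x, P_k x>], so a vector fixed by [P i] is killed by
   every other [P j]. *)
Lemma proj_orth i j x : i != j -> P i x = x -> P j x = 0.
Proof.
move=> ij Pix; apply: ip_def.
have : ip x x = \sum_k ip (P k x) (P k x).
  case: P_meas => _ [_ [_ P_sum]].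
  by rewrite -{2}(P_sum x) /sum_op ip_sumr; apply: eq_bigr => k _; apply: ip_proj.
rewrite (bigD1 i) //= Pix -[ip x x in LHS]addr0 => /addrI/esym/psumr_eq0P.
by apply=> [k _|]; [exact: ip_pos | rewrite eq_sym].
Qed.

Lemma proj_unit_vector i : P i <> (fun _ => 0) -> exists e, P i e = e /\ ip e e = 1.
Proof.
move=> Pi_neq0; have [x Pix_neq0] : exists x, P i x <> 0.
  by apply: not_all_ex_not => Pi0; apply/Pi_neq0/functional_extensionality.
have Pix_gt0 : 0 < sqnorm (P i x).
  by rewrite lt_def sqnorm_ge0 andbT; apply/eqP => /sqnorm_eq0.
exists ((Num.sqrt (sqnorm (P i x)))^-1%:C *: P i x); split.
  by rewrite (linear_funZ (proj_linear i)) proj_idem.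
by rewrite ip_sqnorm sqnormZ exprVn sqr_sqrtr ?sqnorm_ge0 // mulVf ?gt_eqF.
Qed.

Lemma proj_orthonormal_family : (forall i, P i <> (fun _ => 0)) ->
  exists e : 'I_n -> A, (forall i j, ip (e i) (e j) = (i == j)%:R) /\
                        (forall i j, P i (e j) = (i == j)%:R *: e j).
Proof.
move=> P_neq0.
have [e e_unit] := ClassicalEpsilon.choice _ (fun i => proj_unit_vector (P_neq0 i)).
have Pe i j : P i (e j) = (i == j)%:R *: e j.
  have [<-|ij] := eqVneq i j; first by rewrite scale1r (e_unit i).1.
  by rewrite scale0r (@proj_orth j) 1?eq_sym // (e_unit j).1.
exists e; split=> // i j; have [<-|ij] := eqVneq i j; first by rewrite (e_unit i).2.
by rewrite -(e_unit i).1 proj_self_adjoint Pe (negPf ij) scale0r linear0.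
Qed.

End ProjectiveMeasurement.

Lemma in_An_of_proj_measurement (R : realType) (A : HilbertSpace R) n
    (alpha : 'I_n -> R) (P : 'I_n -> A -> A) :
  proj_measurement P -> (forall i, P i <> (fun _ => 0)) ->
  (forall rho, psd_trace_class rho ->
     loewner rho (fun x => \sum_i ((alpha i)%:C *: P i (rho (P i x))))) ->
  in_An alpha.
Proof.
move=> P_meas P_neq0 P_loewner; apply/in_AnP => c.
have [e [e_on Pe]] := proj_orthonormal_family P_meas P_neq0.
have P_lin := proj_linear P_meas.
have P_coord i (d : 'I_n -> R[i]) : P i (\sum_j d j *: e j) = d i *: e i.
  rewrite (linear_fun_sum (P_lin i)) (bigD1 i) //= big1 ?addr0 => [|j ji].
    by rewrite (linear_funZ (P_lin i)) Pe eqxx scale1r.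
  by rewrite (linear_funZ (P_lin i)) Pe eq_sym (negPf ji) scale0r scaler0.
set x := \sum_j c j *: e j; set phi := \sum_j 1 *: e j.
have e_x k : ip (e k) x = c k by apply: ip_orthonormal_sumr.
have e_phi k : ip (e k) phi = 1 by apply: ip_orthonormal_sumr.
have phi_x : ip phi x = \sum_i c i.
  by rewrite ip_suml; apply: eq_bigr => k _; rewrite ipZl conjC1 mul1r e_x.
have x_phi : ip x phi = \sum_i Num.conj (c i) by rewrite ip_conj phi_x rmorph_sum.
have P_term i : ip x ((alpha i)%:C *: P i (ip phi (P i x) *: phi))
    = (alpha i)%:C * (Num.conj (c i) * c i).
  rewrite ipZr (linear_funZ (P_lin i)) !P_coord ipZr [ip phi _]ip_conj e_phi conjC1.
  by rewrite mulr1 scale1r ipZr [ip x _]ip_conj e_x [c i * _]mulrC.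
have := P_loewner _ (rank_one_psd_trace_class phi) x.
rewrite /rank_one ipZr phi_x x_phi ip_sumr (eq_bigr _ (fun i _ => P_term i)).
by rewrite rmorph_sum mulrC.
Qed.

Lemma sum_sandwich_loewner (R : realType) (A B : HilbertSpace R) n
    (alpha : 'I_n -> R) (M : 'I_n -> A -> B) (rho : A -> A) :
  in_An alpha -> (forall i, bounded_op (M i)) -> psd_op rho ->
  loewner (fun y => sum_op M (rho (adjoint (sum_op M) y)))
          (fun y => \sum_i ((alpha i)%:C *: M i (rho (adjoint (M i) y)))).
Proof.
move=> alpha_An M_bnd [[rho_lin _] rho_ge0] y.
have M_adj i := adjoint_bounded (M_bnd i).
have S_adj := is_adjoint_sum_op M_adj.
rewrite /= (is_adjoint_ipr (adjointP S_adj)) (is_adjoint_uniq (adjointP S_adj) S_adj).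
rewrite ip_sumr (eq_bigr (fun i => (alpha i)%:C * ip (adjoint (M i) y) (rho (adjoint (M i) y))))
  => [|i _]; last by rewrite ipZr (is_adjoint_ipr (M_adj i)).
apply: psd_form_sum_le (in_An_sumV_le1 alpha_An) => // i.
exact: lt_le_trans ltr01 (in_An_ge1 alpha_An i).
Qed.

Theorem lemma1 (R : realType) (A B : HilbertSpace R) (n : nat) (hn : (2 <= n)%N) :
  (forall alpha : 'I_n -> R, in_An alpha ->
   forall M : 'I_n -> A -> B, (forall i, bounded_op (M i)) ->
   forall rho : A -> A, psd_trace_class rho ->
     loewner
       (fun y : B => sum_op M (rho (adjoint (sum_op M) y)))
       (fun y : B => \sum_i ((alpha i)%:C%C *: M i (rho (adjoint (M i) y)))))
  /\
  (forall alpha : 'I_n -> R, forall P : 'I_n -> A -> A,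
     proj_measurement P -> (forall i, P i <> (fun _ => 0)) ->
     (forall rho : A -> A, psd_trace_class rho ->
        loewner rho (fun x : A => \sum_i ((alpha i)%:C%C *: P i (rho (P i x))))) ->
     in_An alpha).
Proof.
split=> [alpha alpha_An M M_bnd rho [rho_psd _] | alpha P].
  exact: sum_sandwich_loewner.
exact: in_An_of_proj_measurement.
Qed.
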